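(* Let $\wp\colon\tilde X\to X$ be a $G$-admissible $2$-cover of connected graphs, where $G\leq\mathrm{Aut}\,X$ is vertex-transitive and edge-transitive. Then $\wp$ is $G$-split with a sectional complement if and only if $\wp$ is the canonical double cover. (Equivalently, if $\wp$ is $G$-split, then it is split-transitive relative to $G$ if and only if $\wp$ is not the canonical double cover.)
   Context: Graphs are finite and simple; maps are composed on the right. A regular covering projection $\wp\colon\tilde X\to X$ is a surjective graph homomorphism, locally bijective on neighbourhoods, such that the group $\mathrm{CT}(\wp)$ of covering transformations (automorphisms $c$ of $\tilde X$ with $c\wp=\wp$) acts regularly on each fibre; a $2$-cover has $\mathrm{CT}(\wp)\cong\mathbb{Z}_2$. A lift of $g\in\mathrm{Aut}\,X$ is $\tilde g\in\mathrm{Aut}\,\tilde X$ with $\wp g=\tilde g\wp$; $\wp$ is $G$-admissible if every $g\in G$ has a lift, and then the lifted group $\tilde G$ is the group of all such lifts. $\wp$ is $G$-split if $\mathrm{CT}(\wp)$ has a complement in $\tilde G$. A section is a vertex set of $\tilde X$ meeting each fibre in exactly one vertex; a complement is sectional if it leaves some section invariant and transitive if it is transitive on $V(\tilde X)$; $\wp$ is split-transitive relative to $G$ if it is $G$-split and all complements of $\mathrm{CT}(\wp)$ in $\tilde G$ are transitive. The canonical double cover of $X$ is the $2$-cover obtained as the derived graph of the constant voltage assignment $\zeta(x)=1$ for all arcs $x$ (vertex set $V(X)\times\mathbb{Z}_2$, $(u,i)\sim(v,i+1)$ whenever $u\sim v$, projection $(u,i)\mapsto u$); ''$\wp$ is the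 canonical double cover'' means $\wp$ is isomorphic to this projection (via an isomorphism of covering graphs commuting with the projections). *)

From mathcomp Require Import all_boot all_fingroup.
Set Implicit Arguments. Unset Strict Implicit. Unset Printing Implicit Defensive.
Local Open Scope group_scope.

(* Permutations compose on the right in
   mathcomp ((g * h) x = h (g x)), matching the paper's convention. *)
Definition simple_graph (T : finType) (e : rel T) :=
  symmetric e /\ irreflexive e.

Definition connected_graph (T : finType) (e : rel T) :=
  forall x y : T, connect e x y.

Definition Aut_graph (T : finType) (e : rel T) : {set {perm T}} :=
  [set g : {perm T} | [forall x, forall y, e (g x) (g y) == e x y]].

Definition vertex_transitive (T : finType) (G : {set {perm T}}) :=
  forall x y : T, exists2 g, g \in G & g x = y.

Definition edge_transitive (T : finType) (e : rel T) (G : {set {perm T}}) :=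
  forall x y x' y' : T, e x y -> e x' y' ->
    exists2 g, g \in G &
      ((g x = x' /\ g y = y') \/ (g x = y' /\ g y = x')).

Section Cover.
Variables (T tT : finType) (e : rel T) (te : rel tT) (p : tT -> T).

Definition covering_projection :=
  [/\ forall x : T, exists u : tT, p u = x,
      forall u v : tT, te u v -> e (p u) (p v) &
      forall (u : tT) (y : T), e (p u) y ->
        exists! v : tT, te u v /\ p v = y].

Definition CT : {set {perm tT}} :=
  [set c in Aut_graph te | [forall u, p (c u) == p u]].

Definition regular_covering :=
  covering_projection /\
  forall u v : tT, p u = p v ->
    exists! c : {perm tT}, c \in CT /\ c u = v.

Definition two_cover := regular_covering /\ #|CT| = 2%N.

Definition is_lift (g : {perm T}) (tg : {perm tT}) :=
  tg \in Aut_graph te /\ forall u : tT, p (tg u) = g (p u).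

Definition admissible (G : {set {perm T}}) :=
  forall g, g \in G -> exists tg, is_lift g tg.

Definition lifted_group (G : {set {perm T}}) : {set {perm tT}} :=
  [set tg in Aut_graph te | [exists g in G, [forall u, p (tg u) == g (p u)]]].

Definition is_section (S : {set tT}) :=
  forall x : T, #|[set u in S | p u == x]| = 1%N.

Definition sectional (H : {set {perm tT}}) :=
  exists S : {set tT}, is_section S /\ forall h, h \in H -> h @: S = S.

Definition split_with_sectional_complement (G : {set {perm T}}) :=
  exists H : {group {perm tT}},
    H \in [complements to CT in lifted_group G] /\ sectional H.

(* Canonical double cover: vertex set T * bool, (u,i) ~ (v,i+1) iff u ~ v. *)
Definition cdc_rel : rel (T * bool) :=
  fun a b => e a.1 b.1 && (b.2 == ~~ a.2).

Definition is_canonical_double_cover :=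
  exists phi : tT -> T * bool,
    [/\ bijective phi,
        forall u v, cdc_rel (phi u) (phi v) = te u v &
        forall u, (phi u).1 = p u].

End Cover.

From mathcomp Require Import all_boot all_fingroup.
Set Implicit Arguments. Unset Strict Implicit. Unset Printing Implicit Defensive.
Local Open Scope group_scope.

(* For the canonical double cover, the lifts (u, i) |-> (g u, i) of the elements g of G
   form a complement of CT isomorphic to G that fixes the layer i = 0, which is a section.
   Conversely, let c be the nontrivial covering transformation and S a section fixed by a
   complement H.  Every g in G has a lift in H, and that lift preserves S.  Whether an edge
   of the cover crosses S (joins S to its complement) depends only on the edge it projects
   to, because the other edge over it is its image under c and c swaps S with its
   complement.  Edge-transitivity of G therefore makes either all edges cross or none, and
   a path from u to c u, which lie on opposite sides of S, shows that they all do.  Hence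
   u |-> (p u, u \notin S) is an isomorphism onto the canonical double cover. *)

Section AutGraph.
Variables (T : finType) (e : rel T).

Lemma Aut_graphP (g : {perm T}) :
  reflect (forall x y, e (g x) (g y) = e x y) (g \in Aut_graph e).
Proof.
rewrite inE; apply: (iffP forallP) => [Eg x y|Eg x]; first exact/eqP/(forallP (Eg x)).
by apply/forallP => y; rewrite Eg.
Qed.

Lemma Aut_graph_group_set : group_set (Aut_graph e).
Proof.
apply/group_setP; split=> [|g h /Aut_graphP Eg /Aut_graphP Eh].
  by apply/Aut_graphP => x y; rewrite !perm1.
by apply/Aut_graphP => x y; rewrite !permM Eh Eg.
Qed.

Canonical Aut_graph_group := Group Aut_graph_group_set.

End AutGraph.

Definition crosses (T : finType) (S : {set T}) (u v : T) := (u \in S) != (v \in S).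

Lemma crossesC (T : finType) (S : {set T}) : symmetric (crosses S).
Proof. by move=> u v; rewrite /crosses eq_sym. Qed.

Lemma connect_crosses (T : finType) (e : rel T) (S : {set T}) x y :
  connect e x y -> crosses S x y -> exists u v, e u v /\ crosses S u v.
Proof.
move=> cxy; have [/existsP[u /existsP[v /andP[uv cuv]]] _|/existsPn no_cross] :=
  boolP [exists u, exists v, e u v && crosses S u v]; first by exists u, v.
have S_closed : closed e S.
  move=> u v uv; apply/eqP/negPn; apply: contra (no_cross u) => cuv.
  by apply/existsP; exists v; rewrite uv.
by rewrite /crosses (closed_connect S_closed cxy) eqxx.
Qed.

Section Lifts.
Variables (T tT : finType) (e : rel T) (te : rel tT) (p : tT -> T).

Lemma is_lift1 : is_lift te p 1 1.
Proof. by split=> [|u]; rewrite ?group1 ?perm1. Qed.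

Lemma is_liftM g h tg th :
  is_lift te p g tg -> is_lift te p h th -> is_lift te p (g * h) (tg * th).
Proof. by move=> [tgA tgp] [thA thp]; split=> [|u]; rewrite ?groupM // !permM thp tgp. Qed.

Lemma is_liftV g tg : is_lift te p g tg -> is_lift te p g^-1 tg^-1.
Proof.
move=> [tgA tgp]; split=> [|u]; first by rewrite groupV.
by apply: (@perm_inj _ g); rewrite -tgp !permKV.
Qed.

Lemma is_lift_base_unique g g' tg :
  (forall x, exists u, p u = x) -> is_lift te p g tg -> is_lift te p g' tg -> g = g'.
Proof.
by move=> p_onto [_ tgp] [_ tgp']; apply/permP => x; have [u <-] := p_onto x; rewrite -tgp tgp'.
Qed.

Lemma CTP c : reflect (is_lift te p 1 c) (c \in CT te p).
Proof.
rewrite inE; apply: (iffP andP) => [[cA /forallP cp]|[cA cp]].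
  by split=> // u; rewrite perm1; apply/eqP.
by split=> //; apply/forallP => u; rewrite cp perm1.
Qed.

Lemma CT_group_set : group_set (CT te p).
Proof.
apply/group_setP; split=> [|c d /CTP Lc /CTP Ld]; apply/CTP; first exact: is_lift1.
by rewrite -(mulg1 1); apply: is_liftM.
Qed.

Canonical CT_group := Group CT_group_set.

Lemma covering_lift_unique a b b' :
  covering_projection e te p -> te a b -> te a b' -> p b' = p b -> b' = b.
Proof.
move=> [_ p_hom p_lift] ab ab' pb; have [w [_ uniq_w]] := p_lift a (p b) (p_hom _ _ ab).
by rewrite -(uniq_w b) ?(uniq_w b').
Qed.

Section LiftedGroup.
Variable G : {group {perm T}}.

Lemma lifted_groupP tg :
  reflect (exists2 g, g \in G & is_lift te p g tg) (tg \in lifted_group te p G).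
Proof.
rewrite inE; apply: (iffP andP) => [[tgA /existsP[g /andP[gG /forallP tgp]]]|[g gG [tgA tgp]]].
  by exists g => //; split=> // u; apply/eqP.
by split=> //; apply/existsP; exists g; rewrite gG; apply/forallP => u; rewrite tgp.
Qed.

Lemma complement_lift (H : {group {perm tT}}) g :
  H \in [complements to CT te p in lifted_group te p G] -> admissible te p G ->
  g \in G -> exists2 h, h \in H & is_lift te p g h.
Proof.
move=> /complP[_ CT_H] adm gG; have [tg Ltg] := adm g gG.
have : tg \in CT te p * H by rewrite CT_H; apply/lifted_groupP; exists g.
case/mulsgP=> c h /CTP Lc hH tg_ch; exists h => //.
by rewrite -(mul1g g) -invg1 -(mulKg c h) -tg_ch; apply: is_liftM (is_liftV Lc) Ltg.
Qed.

Lemma lifts_complement (H : {group {perm tT}}) :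
  (forall g, g \in G -> exists2 h, h \in H & is_lift te p g h) ->
  H \subset lifted_group te p G -> CT te p :&: H = 1 ->
  H \in [complements to CT te p in lifted_group te p G].
Proof.
move=> H_lifts /subsetP sHL tiCTH; apply/complP; split=> //; apply/setP => t.
apply/mulsgP/lifted_groupP => [[c h /CTP Lc /sHL/lifted_groupP[g gG Lh] ->]|[g gG Lt]].
  by exists g => //; rewrite -(mul1g g); apply: is_liftM.
have [h hH Lh] := H_lifts g gG; exists (t * h^-1) h => //; last by rewrite mulgKV.
by apply/CTP; rewrite -(mulgV g); apply: is_liftM (is_liftV Lh).
Qed.

End LiftedGroup.
End Lifts.

Section TwoCover.
Variables (T tT : finType) (e : rel T) (te : rel tT) (p : tT -> T).
Hypothesis cover : two_cover e te p.

Let covering : covering_projection e te p := cover.1.1.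

Lemma two_cover_CT : exists2 c, c != 1 & CT te p = [set 1; c].
Proof.
have : 1 \in CT te p := group1 _.
case: cover => _ /eqP/cards2P[c1 [c2 [c12 ->]]]; rewrite !inE => /orP[] /eqP E.
  by exists c2; rewrite E // eq_sym.
by exists c1; rewrite E // setUC.
Qed.

Section Involution.
Variable c : {perm tT}.
Hypotheses (c_neq1 : c != 1) (CT_1c : CT te p = [set 1; c]).

Lemma c_CT : c \in CT te p.
Proof. by rewrite CT_1c !inE eqxx orbT. Qed.

Lemma p_c u : p (c u) = p u.
Proof. by have /CTP[_ cp] := c_CT; rewrite cp perm1. Qed.

Lemma fibreE u v : p v = p u -> v = u \/ v = c u.
Proof.
case: cover => [[_ reg] _] /esym puv; have [c' [[c'CT <-] _]] := reg u v puv.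
by move: c'CT; rewrite CT_1c !inE => /orP[] /eqP ->; [left; rewrite perm1 | right].
Qed.

Lemma c_fixfree u : c u != u.
Proof.
case: cover => [[_ reg] _]; apply/eqP => cu; have [c' [_ uniq_c']] := reg u u erefl.
by case/eqP: c_neq1; rewrite -(uniq_c' c (conj c_CT cu)) (uniq_c' 1 (conj (group1 _) (perm1 u))).
Qed.

Lemma section_c S w : is_section p S -> (c w \in S) = (w \notin S).
Proof.
move=> /(_ (p w)) /eqP/cards1P[x fibre_x].
have in_fibre u : p u = p w -> (u \in S) = (u == x).
  by move=> puw; rewrite -in_set1 -fibre_x inE puw eqxx andbT.
have px : p x = p w by move/setP/(_ x): fibre_x; rewrite !inE eqxx => /andP[_ /eqP].
rewrite !in_fibre ?p_c //; case/fibreE: px => ->; first by rewrite eqxx (negPf (c_fixfree w)).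
by rewrite eqxx eq_sym c_fixfree.
Qed.

Lemma crosses_fibre S a b a' b' : is_section p S -> te a b -> te a' b' ->
  p a' = p a -> p b' = p b -> crosses S a' b' = crosses S a b.
Proof.
move=> secS ab ab' /fibreE[] a'E pb; rewrite a'E in ab' *.
  by rewrite (covering_lift_unique covering ab ab' pb).
have /CTP[cA _] := c_CT.
have cab : te (c a) (c b) by rewrite (Aut_graphP _ _ cA).
rewrite (covering_lift_unique covering cab ab') ?p_c //.
by rewrite /crosses !section_c // (inj_eq negb_inj).
Qed.

Lemma crossing_section_cdc S : is_section p S ->
  (forall u v, te u v -> crosses S u v) -> is_canonical_double_cover e te p.
Proof.
move=> secS all_cross; have [p_onto p_hom p_lift] := covering.
pose phi u := (p u, u \notin S).
have phi_inj : injective phi.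
  move=> u v [puv]; have [-> //|->] := fibreE (esym puv).
  by rewrite section_c // negbK; case: (u \in S).
have phi_onto y : y \in [set phi u | u : tT].
  case: y => x b; have [u <-] := p_onto x.
  have [<-|] := eqVneq (u \notin S) b; first exact: imset_f.
  move=> Sub; apply/imsetP; exists (c u) => //.
  by rewrite /phi p_c section_c // negbK; case: b Sub; case: (u \in S).
exists phi; split=> // [|u v].
  apply: inj_card_bij phi_inj _; rewrite -cardsT; apply: leq_trans (leq_imset_card phi _).
  by apply/subset_leq_card/subsetP => y _; exact: phi_onto.
rewrite /cdc_rel /=; apply/andP/idP => [[puv /eqP Suv]|uv]; last first.
  split; first exact: p_hom.
  by have := all_cross _ _ uv; rewrite /crosses; case: (u \in S); case: (v \in S).
have [w [[uw pw] _]] := p_lift u (p v) puv.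
have [<- // | wc] := fibreE pw.
by move: (all_cross _ _ uw) Suv; rewrite wc /crosses section_c //; case: (u \in S); case: (v \in S).
Qed.

Section SectionalComplement.
Variables (G : {group {perm T}}) (H : {group {perm tT}}) (S : {set tT}).
Hypotheses (te_sym : symmetric te) (te_conn : connected_graph te).
Hypotheses (G_edge_trans : edge_transitive e G) (adm : admissible te p G).
Hypothesis H_compl : H \in [complements to CT te p in lifted_group te p G].
Hypotheses (secS : is_section p S) (H_S : forall h, h \in H -> h @: S = S).

Lemma crosses_edge_invariant u v a b : te u v -> te a b -> crosses S a b = crosses S u v.
Proof.
move=> uv ab; have [_ p_hom _] := covering.
have [g gG g_uv] := G_edge_trans (p_hom _ _ uv) (p_hom _ _ ab).
have [h hH [/Aut_graphP hA hp]] := complement_lift H_compl adm gG.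
have h_S w : (h w \in S) = (w \in S) by rewrite -{1}(H_S hH) mem_imset //; exact: perm_inj.
have [[gu gv]|[gu gv]] := g_uv.
  have huv : te (h u) (h v) by rewrite hA.
  by rewrite (crosses_fibre secS huv ab) ?hp ?gu ?gv // /crosses !h_S.
have hvu : te (h v) (h u) by rewrite hA te_sym.
by rewrite (crosses_fibre secS hvu ab) ?hp ?gu ?gv // crossesC /crosses !h_S.
Qed.

Lemma all_edges_cross u v : te u v -> crosses S u v.
Proof.
move=> uv; have : crosses S u (c u) by rewrite /crosses section_c //; case: (u \in S).
case/(connect_crosses (te_conn u (c u))) => a [b [ab cab]].
by rewrite (crosses_edge_invariant ab uv).
Qed.

End SectionalComplement.
End Involution.

Lemma sectional_complement_cdc (G : {group {perm T}}) :
  symmetric te -> connected_graph te -> edge_transitive e G -> admissible te p G ->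
  split_with_sectional_complement te p G -> is_canonical_double_cover e te p.
Proof.
move=> te_sym te_conn G_edge_trans adm [H [H_compl [S [secS H_S]]]].
have [c c_neq1 CT_1c] := two_cover_CT.
apply: (crossing_section_cdc c_neq1 CT_1c secS) => u v.
exact: (all_edges_cross c_neq1 CT_1c te_sym te_conn G_edge_trans adm H_compl secS H_S).
Qed.

End TwoCover.

Section CanonicalDoubleCover.
Variables (T tT : finType) (e : rel T) (te : rel tT) (p : tT -> T).
Variables (phi : tT -> T * bool) (psi : T * bool -> tT).
Hypotheses (phiK : cancel phi psi) (psiK : cancel psi phi).
Hypotheses (phi_edge : forall u v, cdc_rel e (phi u) (phi v) = te u v).
Hypothesis phi_fst : forall u, (phi u).1 = p u.

Definition layer_lift_fun (g : {perm T}) u := psi (g (phi u).1, (phi u).2).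

Lemma layer_lift_fun_inj g : injective (layer_lift_fun g).
Proof.
move=> u v /(can_inj psiK) [/perm_inj E1 E2]; apply: (can_inj phiK).
by rewrite [phi u]surjective_pairing [phi v]surjective_pairing E1 E2.
Qed.

Definition layer_lift g : {perm tT} := perm (@layer_lift_fun_inj g).

Lemma layer_liftE g u : phi (layer_lift g u) = (g (phi u).1, (phi u).2).
Proof. by rewrite permE psiK. Qed.

Lemma layer_liftM : {morph layer_lift : g h / g * h}.
Proof.
by move=> g h; apply/permP => u; apply: (can_inj phiK); rewrite permM !layer_liftE /= permM.
Qed.

Canonical layer_lift_morphism := @Morphism _ _ [set: {perm T}] layer_lift (in2W layer_liftM).

Lemma layer_lift_is_lift g : g \in Aut_graph e -> is_lift te p g (layer_lift g).
Proof.
move=> /Aut_graphP gA; split=> [|u]; last by rewrite -!phi_fst layer_liftE.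
by apply/Aut_graphP => u v; rewrite -!phi_edge !layer_liftE /cdc_rel /= gA.
Qed.

Definition layer0 : {set tT} := [set u | ~~ (phi u).2].

Lemma layer0_section : is_section p layer0.
Proof.
move=> x; rewrite -(cards1 (psi (x, false))); apply: eq_card => u.
rewrite !inE -phi_fst; apply/andP/eqP => [[u0 /eqP <-]|->]; last by rewrite psiK eqxx.
by apply: (can_inj phiK); rewrite psiK; move: u0; case: (phi u) => y [].
Qed.

Lemma layer_lift_layer0 g : layer_lift g @: layer0 = layer0.
Proof.
apply/eqP; rewrite eqEcard card_imset ?leqnn ?andbT; last exact: perm_inj.
by apply/subsetP => _ /imsetP[u + ->]; rewrite !inE layer_liftE.
Qed.

Lemma cdc_split_sectional (G : {group {perm T}}) :
  G \subset Aut_graph e -> split_with_sectional_complement te p G.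
Proof.
move=> /subsetP sGA; have lift_G g : g \in G -> is_lift te p g (layer_lift g).
  by move=> gG; exact/layer_lift_is_lift/sGA.
have p_onto x : exists u, p u = x by exists (psi (x, false)); rewrite -phi_fst psiK.
exists (layer_lift_morphism @* G)%G; split; last first.
  exists layer0; split=> [|_ /morphimP[g _ _ ->]]; first exact: layer0_section.
  exact: layer_lift_layer0.
apply: lifts_complement.
- by move=> g gG; exists (layer_lift g); [rewrite mem_morphim ?inE | exact: lift_G].
- by apply/subsetP => _ /morphimP[g _ gG ->]; apply/lifted_groupP; exists g; last exact: lift_G.
apply/trivgP/subsetP => t /setIP[/CTP Lt /morphimP[g _ gG t_g]]; rewrite t_g in Lt *.
by rewrite (is_lift_base_unique p_onto (lift_G g gG) Lt) morph1 inE.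
Qed.

End CanonicalDoubleCover.

Theorem proposition3p3 (T tT : finType) (e : rel T) (te : rel tT)
    (p : tT -> T) (G : {group {perm T}}) :
  simple_graph e -> simple_graph te ->
  connected_graph e -> connected_graph te ->
  two_cover e te p ->
  G \subset Aut_graph e ->
  vertex_transitive G -> edge_transitive e G ->
  admissible te p G ->
  (split_with_sectional_complement te p G <-> is_canonical_double_cover e te p).
Proof.
move=> _ [te_sym _] _ te_conn cover GA _ G_edge_trans adm; split.
  exact: sectional_complement_cdc.
case=> phi [[psi phiK psiK] phi_edge phi_fst].
exact: cdc_split_sectional phiK psiK phi_edge phi_fst G GA.
Qed.
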